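(* Let $1\le p<\infty$. Every lattice homomorphism on $\ell^p$ (with the coordinatewise order) has a non-trivial closed invariant subspace which is an ideal.
   Context: On $\ell^p$, $x\ge0$ means all coordinates are real and nonnegative, and lattice operations are coordinatewise. A lattice homomorphism is a bounded positive operator $T$ with $T(x\vee y)=Tx\vee Ty$. An ideal is a linear subspace $M$ such that $|x|\le|y|$ coordinatewise and $y\in M$ imply $x\in M$. Non-trivial means different from $\{0\}$ and $\ell^p$. *)

From HB Require Import structures.
From mathcomp Require Import all_boot all_order all_algebra.
From mathcomp Require Import all_classical all_reals all_analysis.
Set Implicit Arguments. Unset Strict Implicit. Unset Printing Implicit Defensive.
Import Order.TTheory GRing.Theory Num.Theory.
Import numFieldNormedType.Exports.
Local Open Scope classical_set_scope.
Local Open Scope ring_scope.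

Section Lp.
Variable R : realType.
Implicit Types (p : R) (x y : nat -> R).

Definition lp p x : Prop := cvgn (series (fun n => `|x n| `^ p)).

Definition lpnorm p x : R := (limn (series (fun n => `|x n| `^ p))) `^ p^-1.

Definition nonneg_seq x : Prop := forall n, 0 <= x n.
Definition sup_seq x y : nat -> R := fun n => Num.max (x n) (y n).

Definition bounded_op p (T : (nat -> R) -> (nat -> R)) : Prop :=
  [/\ (forall x, lp p x -> lp p (T x)),
      (forall (a b : R) x y, lp p x -> lp p y ->
         T (fun n => a * x n + b * y n) = (fun n => a * T x n + b * T y n)) &
      exists C : R, forall x, lp p x -> lpnorm p (T x) <= C * lpnorm p x].

Definition positive_op p (T : (nat -> R) -> (nat -> R)) : Prop :=
  forall x, lp p x -> nonneg_seq x -> nonneg_seq (T x).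

Definition lattice_hom p (T : (nat -> R) -> (nat -> R)) : Prop :=
  [/\ bounded_op p T, positive_op p T &
      forall x y, lp p x -> lp p y -> T (sup_seq x y) = sup_seq (T x) (T y)].

Definition lp_subspace p (M : set (nat -> R)) : Prop :=
  [/\ M `<=` lp p, M (fun _ => 0) &
      forall (a b : R) x y, M x -> M y -> M (fun n => a * x n + b * y n)].

Definition lp_closed p (M : set (nat -> R)) : Prop :=
  forall (u : nat -> nat -> R) x, (forall k, M (u k)) -> lp p x ->
    (fun k => lpnorm p (fun n => u k n - x n)) @ \oo --> (0 : R) -> M x.

Definition lp_ideal p (M : set (nat -> R)) : Prop :=
  lp_subspace p M /\
  forall x y, lp p x -> (forall n, `|x n| <= `|y n|) -> M y -> M x.

Definition op_invariant (T : (nat -> R) -> (nat -> R)) (M : set (nat -> R)) :=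
  forall x, M x -> M (T x).

Definition nontrivial p (M : set (nat -> R)) : Prop :=
  (exists x, M x /\ x <> (fun _ => 0)) /\ (exists y, lp p y /\ ~ M y).

End Lp.

From HB Require Import structures.
From mathcomp Require Import all_boot all_order all_algebra.
From mathcomp Require Import all_classical all_reals all_analysis.
From mathcomp Require Import lra.
Set Implicit Arguments. Unset Strict Implicit. Unset Printing Implicit Defensive.
Import Order.TTheory GRing.Theory Num.Theory.
Import numFieldNormedType.Exports.
Local Open Scope classical_set_scope.
Local Open Scope ring_scope.

(* Let e_k be the unit sequences.  A bounded linear operator T on
   l^p is determined coordinatewise by the matrix entries T(e_k)_n: if all the
   products T(e_k)_n * x_k vanish, then (T x)_n = 0 (truncate x and let the
   tail go to zero in norm).  For a lattice homomorphism the vectors T(e_k) are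
   pairwise disjoint, since T(e_j v e_k) = T e_j v T e_k and also
   T(e_j v e_k) = T e_j + T e_k for j <> k.  Hence every coordinate n has at
   most one "parent" s(n) with T(e_{s(n)})_n > 0, and by positivity of T all
   other entries T(e_k)_n vanish.
   For any set B of coordinates, the sequences of l^p vanishing on B form a
   closed ideal; it is T-invariant as soon as B is closed under s.  We take
   for B the forward s-orbit {s(0), s(s(0)), ...}: it is nonempty and s-closed,
   and it is not all of nat (an orbit containing its starting point is
   periodic, hence finite), which makes the ideal non-trivial. *)

Section SequenceSpace.
Variables (R : realType) (p : R).
Hypothesis p_gt0 : 0 < p.

Let p_neq0 : p != 0. Proof. by rewrite gt_eqF. Qed.
Let invp_ge0 : 0 <= p^-1. Proof. by rewrite invr_ge0 ltW. Qed.

Lemma powR_mono (a b : R) : 0 <= a -> a <= b -> a `^ p <= b `^ p.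
Proof.
move=> a0 ab; apply: (ge0_ler_powR (ltW p_gt0)); rewrite ?nnegrE //.
exact: le_trans ab.
Qed.

Lemma lp_le (x y : nat -> R) :
  lp p y -> (forall n, `|x n| <= `|y n|) -> lp p x.
Proof.
move=> ly hxy; apply: (@series_le_cvg R _ (fun n => `|y n| `^ p)) => //.
by move=> n; apply: powR_mono.
Qed.

Lemma lp_finite_support (x : nat -> R) N :
  (forall n, (N <= n)%N -> x n = 0) -> lp p x.
Proof.
move=> hx; apply/cvg_ex; exists (series (fun n => `|x n| `^ p) N).
apply: cvg_near_cst; near=> n.
have : (N <= n)%N by near: n; exact: nbhs_infty_ge.
move=> /subnK <-; elim: (n - N)%N => //= k IH.
by rewrite addSn seriesSr IH hx ?leq_addl // normr0 powR0 // addr0.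
Unshelve. all: by end_near. Qed.

(* l^p is a vector space: |a x_n + b y_n|^p <= (|a|+|b|)^p (|x_n|^p + |y_n|^p). *)
Lemma lp_comb (a b : R) (x y : nat -> R) : lp p x -> lp p y ->
  lp p (fun n => a * x n + b * y n).
Proof.
move=> lx ly; pose K := (`|a| + `|b|) `^ p.
apply: (@series_le_cvg R _
  (K *: ((fun n => `|x n| `^ p) + (fun n => `|y n| `^ p)))).
- by move=> n /=; exact: powR_ge0.
- by move=> n /=; rewrite mulr_ge0 ?addr_ge0 ?powR_ge0.
- move=> n /=; pose m := Num.max `|x n| `|y n|.
  have bound : `|a * x n + b * y n| <= (`|a| + `|b|) * m.
    rewrite (le_trans (ler_normD _ _)) // !normrM mulrDl.
    by rewrite lerD // ler_wpM2l // le_max lexx ?orbT.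
  have m0 : 0 <= m by rewrite le_max normr_ge0.
  rewrite (le_trans (powR_mono (normr_ge0 _) bound)) // powRM ?addr_ge0 //.
  rewrite ler_wpM2l ?powR_ge0 // /m.
  by case: (leP `|x n| `|y n|) => _; [rewrite lerDr | rewrite lerDl]; exact: powR_ge0.
- by apply: is_cvg_seriesZ; apply: is_cvg_seriesD.
Qed.

Lemma lp_coord_le_norm (y : nat -> R) n : lp p y -> `|y n| <= lpnorm p y.
Proof.
move=> ly.
have term_le : `|y n| `^ p <= limn (series (fun n => `|y n| `^ p)).
  apply: le_trans (nondecreasing_cvgn_le _ ly n.+1).
    by rewrite seriesSr lerDr sumr_ge0 // => i _; exact: powR_ge0.
  by apply: nondecreasing_series => k _ _; exact: powR_ge0.
rewrite /lpnorm -[X in X <= _](@powRr1 _ `|y n|) // -(mulfV p_neq0) powRrM.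
apply: (ge0_ler_powR invp_ge0); rewrite ?nnegrE ?powR_ge0 //.
exact: le_trans (powR_ge0 _ _) term_le.
Qed.

Definition trunc N (x : nat -> R) n := if (n < N)%N then x n else 0.
Definition tail N (x : nat -> R) n := if (n < N)%N then 0 else x n.

Lemma lp_trunc N x : lp p x -> lp p (trunc N x).
Proof.
by move=> lx; apply: (lp_le lx) => n; rewrite /trunc; case: ifP; rewrite ?normr0.
Qed.

Lemma lp_tail N x : lp p x -> lp p (tail N x).
Proof.
by move=> lx; apply: (lp_le lx) => n; rewrite /tail; case: ifP; rewrite ?normr0.
Qed.

Lemma series_tail N x m :
  series (fun n => `|tail N x n| `^ p) m =
  series (fun n => `|x n| `^ p) m - series (fun n => `|x n| `^ p) (minn m N).
Proof.
elim: m => [|m IH]; first by rewrite /series /= min0n subrr big_geq.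
rewrite seriesSr IH /tail; case: (ltnP m N) => hm.
  by rewrite (minn_idPl hm) normr0 powR0 // addr0 !subrr.
by rewrite (minn_idPr (leqW hm)) /= seriesSr addrAC.
Qed.

Lemma tail_small x : lp p x ->
  forall e, 0 < e -> exists N, lpnorm p (tail N x) <= e.
Proof.
move=> lx e e0; set S := series (fun n => `|x n| `^ p); set L := limn S.
have ep : 0 < e `^ p by rewrite powR_gt0.
have [N _ HN] := cvgr_dist_le _ _ (lx : S @ \oo --> L) _ ep.
exists N; have close : `|L - S N| <= e `^ p by apply: HN => /=.
have cvB : (fun m => S m - S N) @ \oo --> L - S N by apply: cvgB; [exact: lx|exact: cvg_cst].
set St := series (fun n => `|tail N x n| `^ p).
have tail_le : limn St <= L - S N.
  rewrite -(cvg_lim _ cvB) //; apply: ler_lim => //.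
  - exact: lp_tail.
  - by apply/cvg_ex; eexists; exact: cvB.
  near=> m; rewrite /St series_tail (minn_idPr _) //.
  by near: m; exact: nbhs_infty_ge.
have tail_ge0 : 0 <= limn St.
  apply: limr_ge; first exact: lp_tail.
  by near=> m; apply: sumr_ge0 => i _; exact: powR_ge0.
rewrite /lpnorm -/St (le_trans (ge0_ler_powR invp_ge0 _ _ tail_le)) ?nnegrE //.
- exact: le_trans tail_le.
rewrite -[leRHS](@powRr1 _ e) ?(ltW e0) // -(mulfV p_neq0) powRrM.
apply: (ge0_ler_powR invp_ge0); rewrite ?nnegrE ?powR_ge0 //.
  exact: le_trans tail_le.
by rewrite (le_trans (ler_norm _)).
Unshelve. all: by end_near. Qed.

Definition unit_seq (k : nat) : nat -> R := fun n => if n == k then 1 else 0.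

Lemma lp_unit_seq k : lp p (unit_seq k).
Proof.
apply: (lp_finite_support (N := k.+1)) => n hn; rewrite /unit_seq.
by case: eqP => // E; move: hn; rewrite E ltnn.
Qed.

Lemma lp_zero : lp p (fun _ => 0).
Proof. exact: (lp_finite_support (N := 0)). Qed.

Section BoundedOperator.
Variable T : (nat -> R) -> (nat -> R).
Hypothesis hT : bounded_op p T.

Lemma bounded_op_zero : T (fun _ => 0) = (fun _ => 0).
Proof.
have [_ hlin _] := hT.
have := hlin 0 0 _ _ lp_zero lp_zero.
have -> : (fun m : nat => 0 * 0 + 0 * 0) = (fun _ => 0 : R).
  by apply/funext => m; rewrite mul0r addr0.
by move=> ->; apply/funext => m; rewrite !mul0r addr0.
Qed.

Lemma bounded_op_trunc x N : lp p x ->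
  T (trunc N x) = fun n => \sum_(k < N) x k * T (unit_seq k) n.
Proof.
have [_ hlin _] := hT; move=> lx; elim: N => [|N IH].
  have -> : trunc 0 x = (fun _ => 0) by apply/funext.
  by rewrite bounded_op_zero; apply/funext => n; rewrite big_ord0.
have -> : trunc N.+1 x = (fun m => 1 * trunc N x m + x N * unit_seq N m).
  apply/funext => m; rewrite /trunc /unit_seq ltnS leq_eqVlt.
  case: (eqVneq m N) => [->|_] /=; first by rewrite ltnn mulr1 mulr0 add0r.
  by rewrite mul1r mulr0 addr0.
rewrite hlin ?IH; [|exact: lp_trunc|exact: lp_unit_seq].
by apply/funext => n; rewrite big_ord_recr /= mul1r.
Qed.

Lemma bounded_op_tail_small x n : lp p x ->
  forall e, 0 < e -> exists N, `|T (tail N x) n| <= e.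
Proof.
have [hl _ [C hC]] := hT; move=> lx e e0.
have c0 : 0 < `|C| + 1 by rewrite ltr_wpDl.
have [N hN] := tail_small lx (divr_gt0 e0 c0); exists N.
have ltx := lp_tail (N := N) lx; have norm_ge0 : 0 <= lpnorm p (tail N x) by exact: powR_ge0.
apply: (le_trans (lp_coord_le_norm n (hl _ ltx))).
apply: (le_trans (hC _ ltx)).
apply: (@le_trans _ _ ((`|C| + 1) * lpnorm p (tail N x))).
  by rewrite ler_wpM2r // (le_trans (ler_norm _)) // lerDl.
by rewrite (le_trans (ler_wpM2l (ltW c0) hN)) // mulrC divfK ?gt_eqF.
Qed.

Lemma bounded_op_coord_zero x n : lp p x ->
  (forall k, x k * T (unit_seq k) n = 0) -> T x n = 0.
Proof.
have [_ hlin _] := hT; move=> lx hk.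
have split_at N : T x n = T (tail N x) n.
  have decomp : x = (fun m => 1 * trunc N x m + 1 * tail N x m).
    by apply/funext => m; rewrite /trunc /tail; case: ifP; rewrite !mul1r ?add0r ?addr0.
  rewrite {1}decomp hlin; [|exact: lp_trunc|exact: lp_tail].
  rewrite bounded_op_trunc //= big1 => [|k _]; last exact: hk.
  by rewrite mulr0 add0r mul1r.
apply/eqP; rewrite -normr_le0; apply/ler_addgt0Pr => e e0; rewrite add0r.
by have [N hN] := bounded_op_tail_small n lx e0; rewrite (split_at N).
Qed.

End BoundedOperator.

Section LatticeHomomorphism.
Variable T : (nat -> R) -> (nat -> R).
Hypothesis hT : lattice_hom p T.

Lemma unit_seq_nonneg k : nonneg_seq (unit_seq k).
Proof. by move=> m; rewrite /unit_seq; case: eqP. Qed.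

Lemma sup_unit_seq j k : j != k ->
  sup_seq (unit_seq j) (unit_seq k) = fun m => 1 * unit_seq j m + 1 * unit_seq k m.
Proof.
move=> njk; apply/funext => m; rewrite /sup_seq /unit_seq !mul1r.
case: (eqVneq m j) => [->|mj]; first by rewrite (negbTE njk) addr0 max_l ?ler01.
by case: (eqVneq m k) => _; rewrite ?add0r ?addr0 ?max_r ?ler01 ?maxxx.
Qed.

Lemma lattice_hom_disjoint n j k :
  0 < T (unit_seq j) n -> 0 < T (unit_seq k) n -> j = k.
Proof.
have [[_ hlin _] _ hsup] := hT; move=> hj hk; apply/eqP/negP => /negP njk.
have := hsup _ _ (lp_unit_seq (k := j)) (lp_unit_seq (k := k)).
rewrite sup_unit_seq // hlin; [|exact: lp_unit_seq|exact: lp_unit_seq].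
move=> /(congr1 (fun f => f n)); rewrite /sup_seq !mul1r.
by case: leP => _; lra.
Qed.

Lemma lattice_hom_parent :
  exists s : nat -> nat, forall n k, 0 < T (unit_seq k) n -> k = s n.
Proof.
have /choice[s hs] : forall n, exists s, forall k, 0 < T (unit_seq k) n -> k = s.
  move=> n; have [[k0 hk0]|none] := pselect (exists k, 0 < T (unit_seq k) n).
    by exists k0 => k hk; exact: lattice_hom_disjoint hk hk0.
  by exists 0%N => k hk; exfalso; apply: none; exists k.
by exists s.
Qed.

End LatticeHomomorphism.

Definition vanishing_on (B : set nat) : set (nat -> R) :=
  [set x | lp p x /\ forall m, B m -> x m = 0].

Lemma vanishing_on_ideal B : lp_ideal p (vanishing_on B).
Proof.
split; first split.
- by move=> x [].
- by split; [exact: lp_zero|].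
- move=> a b x y [lx hx] [ly hy]; split; first exact: lp_comb.
  by move=> m Bm; rewrite hx // hy // !mulr0 addr0.
move=> x y lx hxy [ly hy]; split => // m Bm.
by have := hxy m; rewrite hy // normr0 normr_le0 => /eqP.
Qed.

(* Closedness: each coordinate functional is continuous for the l^p norm. *)
Lemma vanishing_on_closed B : lp_closed p (vanishing_on B).
Proof.
move=> u x hu lx hcv; split => // m Bm.
apply/eqP; rewrite -normr_le0; apply: (cvgr_to_ge hcv); apply: nearW => k.
have [luk hvan] := hu k.
have ldiff : lp p (fun n => u k n - x n).
  have -> : (fun n => u k n - x n) = (fun n => 1 * u k n + (-1) * x n).
    by apply/funext => n; rewrite mul1r mulN1r.
  exact: lp_comb.
by have := lp_coord_le_norm m ldiff; rewrite /= hvan // sub0r normrN.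
Qed.

Lemma vanishing_on_nontrivial B a b : ~ B a -> B b ->
  nontrivial p (vanishing_on B).
Proof.
move=> Ba Bb; split.
- exists (unit_seq a); split.
    split=> [|m Bm]; first exact: lp_unit_seq.
    by rewrite /unit_seq; case: eqP => // E; exfalso; apply: Ba; rewrite -E.
  by move=> /(congr1 (fun f => f a)); rewrite /unit_seq eqxx => /eqP; rewrite oner_eq0.
- exists (unit_seq b); split; first exact: lp_unit_seq.
  by move=> [_ /(_ b Bb)]; rewrite /unit_seq eqxx => /eqP; rewrite oner_eq0.
Qed.

Lemma vanishing_on_invariant (T : (nat -> R) -> (nat -> R)) B :
  bounded_op p T -> (forall n k, B n -> T (unit_seq k) n != 0 -> B k) ->
  op_invariant T (vanishing_on B).
Proof.
move=> hT closedB x [lx hx]; have [hl _ _] := hT; split; first exact: hl.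
move=> n Bn; apply: bounded_op_coord_zero => // k.
have [->|nz] := eqVneq (T (unit_seq k) n) 0; first by rewrite mulr0.
by rewrite hx ?mul0r //; exact: closedB nz.
Qed.

End SequenceSpace.

(* A forward orbit {s x0, s (s x0), ...} of a map on nat never exhausts nat:
   if it contains x0 it is periodic, hence bounded. *)
Lemma forward_orbit_not_full (s : nat -> nat) x0 :
  exists a, ~ exists i, a = iter i.+1 s x0.
Proof.
have [[i hi]|notin] := pselect (exists i, x0 = iter i.+1 s x0); last by exists x0.
have periodic q r : iter (q * i.+1 + r) s x0 = iter r s x0.
  elim: q => [|q IH]; first by rewrite mul0n add0n.
  by rewrite mulSn -addnA addnC iterD -hi IH.
exists (\max_(j < i.+1) iter j s x0).+1 => -[j hj].
have : (iter j.+1 s x0 <= \max_(j < i.+1) iter j s x0)%N.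
  rewrite (divn_eq j.+1 i.+1) periodic.
  exact: (leq_bigmax (Ordinal (ltn_pmod j.+1 (ltn0Sn i)))).
by rewrite -hj ltnn.
Qed.

Theorem corollary3p6 (R : realType) (p : R) (hp : 1 <= p)
  (T : (nat -> R) -> (nat -> R)) (hT : lattice_hom p T) :
  exists M : set (nat -> R),
    [/\ lp_ideal p M, lp_closed p M, op_invariant T M & nontrivial p M].
Proof.
have p_gt0 : 0 < p := lt_le_trans ltr01 hp.
have [hbounded hpos _] := hT.
have [s hs] := lattice_hom_parent p_gt0 hT.
pose B : set nat := fun m => exists i, m = iter i.+1 s 0%N.
have [a Ba] := forward_orbit_not_full s 0%N.
have B_closed n k : B n -> T (unit_seq R k) n != 0 -> B k.
  move=> [i ->] nz; exists i.+1; apply: hs.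
  rewrite lt_def nz; apply: hpos; [exact: lp_unit_seq | exact: unit_seq_nonneg].
exists (vanishing_on p B); split.
- exact: vanishing_on_ideal.
- exact: vanishing_on_closed.
- exact: vanishing_on_invariant.
- by apply: (vanishing_on_nontrivial p_gt0 (b := s 0%N) Ba); exists 0%N.
Qed.
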